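(* Let $\mathcal{G}$ and $\mathcal{H}$ be groupoids (not necessarily finite) and let $\phi,\psi\colon\widetilde{S}(\mathcal{G})\to\widetilde{S}(\mathcal{H})$ be morphisms of quasi-schemoids. Then $\phi\simeq\psi$ if and only if there exists a homotopy $\phi\Rightarrow\psi$.
   Context: For a groupoid $\mathcal{H}$, the quasi-schemoid $\widetilde{S}(\mathcal{H})=(\widetilde{\mathcal{H}},S)$ has $ob(\widetilde{\mathcal{H}})=mor(\mathcal{H})$, $\mathrm{Hom}_{\widetilde{\mathcal{H}}}(g,h)=\{(h,g)\}$ if $t(h)=t(g)$ and empty otherwise (composition $(k,h)\circ(h,g)=(k,g)$), and partition $S=\{\mathcal{G}_f\}_{f\in mor(\mathcal{H})}$ with $\mathcal{G}_f=\{(k,l)\mid k^{-1}l=f\}$. A morphism of quasi-schemoids is a functor sending each block of the source partition into some block of the target partition. Product: $(\mathcal{C},S)\times(\mathcal{E},S')=(\mathcal{C}\times\mathcal{E},\{\sigma\times\tau\})$. $[1]$ has objects $0,1$ and one non-identity morphism $0\to1$; $I=([1],\{\{f\}\}_f)$. A homotopy $H\colon F\Rightarrow G$ is a morphism $H\colon(\mathcal{C},S)\times I\to(\mathcal{D},S')$ with $H\circ\varepsilon_0=F$, $H\circ\varepsilon_1=G$ ($\varepsilon_i(a)=(a,i)$, $\varepsilon_i(f)=(f,1_i)$). $F\sim G$ means there is a homotopy $F\Rightarrow G$ or $G\Rightarrow F$; $F\simeq G$ means there is a finite chain $F=F_0\sim F_1\sim\cdots\sim F_n=G$. *)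

From Stdlib Require Import Relations Eqdep_dec Bool.

Record Category := {
  Ob :> Type;
  Hom : Ob -> Ob -> Type;
  idm : forall a, Hom a a;
  comp : forall a b c, Hom b c -> Hom a b -> Hom a c;
  comp_assoc : forall a b c d (h : Hom c d) (g : Hom b c) (f : Hom a b),
      comp a c d h (comp a b c g f) = comp a b d (comp b c d h g) f;
  comp_id_l : forall a b (f : Hom a b), comp a b b (idm b) f = f;
  comp_id_r : forall a b (f : Hom a b), comp a a b f (idm a) = f }.

Arguments Hom {c} a b : rename.
Arguments idm {c} a : rename.
Arguments comp {c a b c0} g f : rename.

Record Groupoid := {
  gcat :> Category;
  ginv : forall a b : Ob gcat, Hom a b -> Hom b a;
  ginv_l : forall (a b : Ob gcat) (f : Hom a b), comp (ginv a b f) f = idm a;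
  ginv_r : forall (a b : Ob gcat) (f : Hom a b), comp f (ginv a b f) = idm b }.

Arguments ginv {g a b} f.

Definition Mor (C : Category) : Type :=
  { p : Ob C * Ob C & Hom (fst p) (snd p) }.
Definition msrc {C : Category} (m : Mor C) : Ob C := fst (projT1 m).
Definition mtgt {C : Category} (m : Mor C) : Ob C := snd (projT1 m).
Definition mhom {C : Category} (m : Mor C) : Hom (msrc m) (mtgt m) := projT2 m.
Definition mkMor {C : Category} {a b : Ob C} (f : Hom a b) : Mor C :=
  existT (fun p : Ob C * Ob C => Hom (fst p) (snd p)) (a, b) f.

Record Functor (C D : Category) := {
  fobj : Ob C -> Ob D;
  fmap : forall a b : Ob C, Hom a b -> Hom (fobj a) (fobj b);
  fmap_id : forall a, fmap a a (idm a) = idm (fobj a);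
  fmap_comp : forall a b c (g : Hom b c) (f : Hom a b),
      fmap a c (comp g f) = comp (fmap b c g) (fmap a b f) }.

Arguments fobj {C D} f a : rename.
Arguments fmap {C D} f {a b} m : rename.

Definition Fcomp {C D E : Category} (G : Functor D E) (F : Functor C D)
  : Functor C E.
Proof.
  refine {| fobj := fun a => fobj G (fobj F a);
            fmap := fun a b m => fmap G (fmap F m) |}.
  - intros a. rewrite (fmap_id _ _ F), (fmap_id _ _ G). reflexivity.
  - intros a b c g f. rewrite (fmap_comp _ _ F), (fmap_comp _ _ G). reflexivity.
Defined.

Definition prodCat (C E : Category) : Category.
Proof.
  refine {| Ob := (Ob C * Ob E)%type;
            Hom := fun x y => (Hom (fst x) (fst y) * Hom (snd x) (snd y))%type;
            idm := fun x => (idm (fst x), idm (snd x));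
            comp := fun x y z g f => (comp (fst g) (fst f), comp (snd g) (snd f)) |}.
  - intros. f_equal; apply comp_assoc.
  - intros a b [f1 f2]. simpl. f_equal; apply comp_id_l.
  - intros a b [f1 f2]. simpl. f_equal; apply comp_id_r.
Defined.

(* ---------- The category [1] : objects 0 (=false), 1 (=true),
   one non-identity morphism 0 -> 1 ---------- *)
Lemma implb_trans_ (a b c : bool) :
  implb b c = true -> implb a b = true -> implb a c = true.
Proof. destruct a, b, c; simpl; auto. Qed.

Lemma implb_refl_ (a : bool) : implb a a = true.
Proof. destruct a; reflexivity. Qed.

Lemma bool_eq_uip (x y : bool) (p q : x = y) : p = q.
Proof. apply UIP_dec. exact bool_dec. Qed.

Definition Interval : Category.
Proof.
  refine {| Ob := bool;
            Hom := fun a b => implb a b = true;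
            idm := implb_refl_;
            comp := fun a b c g f => implb_trans_ a b c g f |};
  intros; apply bool_eq_uip.
Defined.

(* A category together with a family of blocks (indexed by qidx)
   of morphisms; in the paper this family is a partition of mor(C). *)
Record QS := {
  qcat : Category;
  qidx : Type;
  qblock : qidx -> forall a b : Ob qcat, Hom a b -> Prop }.

Arguments qblock q i {a b} m.

Record QSMor (X Y : QS) := {
  qfun : Functor (qcat X) (qcat Y);
  qfun_blocks : forall i : qidx X, exists j : qidx Y,
      forall (a b : Ob (qcat X)) (m : Hom a b),
        qblock X i m -> qblock Y j (fmap qfun m) }.

Arguments qfun {X Y} q.

Definition QSprod (X Y : QS) : QS :=
  {| qcat := prodCat (qcat X) (qcat Y);
     qidx := (qidx X * qidx Y)%type;
     qblock := fun ij a b m => qblock X (fst ij) (fst m) /\ qblock Y (snd ij) (snd m) |}.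

(* I = ([1], {{f}}_f) : every block is a singleton. *)
Definition Iqs : QS :=
  {| qcat := Interval;
     qidx := Mor Interval;
     qblock := fun i a b m => mkMor m = i |}.

(* Objects: mor(H); Hom(g,h) is the singleton {(h,g)} if t(h) = t(g),
   empty otherwise; we model it as the proposition t(h) = t(g). *)
Definition St_cat (H : Groupoid) : Category.
Proof.
  refine {| Ob := Mor H;
            Hom := fun g h => mtgt h = mtgt g;
            idm := fun g => eq_refl;
            comp := fun a b c (g : mtgt c = mtgt b) (f : mtgt b = mtgt a) => eq_trans g f |}.
  - intros a b c d h g f. destruct h, g, f. reflexivity.
  - intros a b f. destruct f. reflexivity.
  - intros a b f. reflexivity.
Defined.

(* For the morphism (k,l) : l -> k (so t(k) = t(l)), the composite
   k^{-1} l : s(l) -> s(k). *)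
Definition St_quot (H : Groupoid) (l k : Mor H) (e : mtgt k = mtgt l)
  : Hom (msrc l) (msrc k) :=
  comp (ginv (mhom k))
       (eq_rect (mtgt l) (fun y => Hom (msrc l) y) (mhom l) (mtgt k) (eq_sym e)).

Definition Stilde (H : Groupoid) : QS :=
  {| qcat := St_cat H;
     qidx := Mor H;
     qblock := fun f (l k : Mor H) (e : mtgt k = mtgt l) =>
                 mkMor (St_quot H l k e) = f |}.

Definition eps (C : Category) (i : bool) : Functor C (prodCat C Interval).
Proof.
  refine {| fobj := fun a => (a, i) : Ob (prodCat C Interval);
            fmap := fun a b f => ((f, @idm Interval i) : @Hom (prodCat C Interval) (a, i) (b, i)) |}.
  - intros a. reflexivity.
  - intros a b c g f. simpl. f_equal. symmetry. apply (comp_id_l Interval).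
Defined.

Definition is_homotopy {X Y : QS} (F G : QSMor X Y) (Hm : QSMor (QSprod X Iqs) Y)
  : Prop :=
  Fcomp (qfun Hm) (eps (qcat X) false) = qfun F /\
  Fcomp (qfun Hm) (eps (qcat X) true) = qfun G.

Definition homotopy_to {X Y : QS} (F G : QSMor X Y) : Prop :=
  exists Hm : QSMor (QSprod X Iqs) Y, is_homotopy F G Hm.

Definition qs_sim {X Y : QS} (F G : QSMor X Y) : Prop :=
  homotopy_to F G \/ homotopy_to G F.

Definition qs_htpc {X Y : QS} (F G : QSMor X Y) : Prop :=
  clos_refl_trans_1n (QSMor X Y) qs_sim F G.

From Stdlib Require Import Eqdep ProofIrrelevance FunctionalExtensionality Classical.

(* A homotopy phi => psi between morphisms S~(G) -> S~(H) carries no data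
   beyond its values on objects, which are forced to be phi on the 0-end and
   psi on the 1-end.  It exists iff two conditions hold: t(psi b) = t(phi a)
   whenever t(b) = t(a), and the "mixed" maps (k, l) |-> (psi k, phi l) send
   morphisms in a common block to morphisms in a common block.  These
   conditions define a reflexive, symmetric and transitive relation
   (transitivity uses the 1-end image (chi k, chi k) of an identity), so any
   zigzag of homotopies collapses to a single homotopy. *)

Section GroupoidInverse.
Variable K : Groupoid.

Lemma ginv_unique (a b : Ob K) (f : Hom a b) (g : Hom b a) :
  comp g f = idm a -> g = ginv f.
Proof.
  intro Hg. rewrite <- (comp_id_r K b a g), <- (ginv_r K a b f).
  rewrite comp_assoc, Hg. apply comp_id_l.
Qed.

Lemma ginv_comp (a b c : Ob K) (f : Hom a b) (g : Hom b c) :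
  ginv (comp g f) = comp (ginv f) (ginv g).
Proof.
  symmetry. apply ginv_unique.
  rewrite <- comp_assoc, (comp_assoc K _ _ _ _ (ginv g) g f), ginv_l, comp_id_l.
  apply ginv_l.
Qed.

Lemma ginvK (a b : Ob K) (f : Hom a b) : ginv (ginv f) = f.
Proof. symmetry. apply ginv_unique. apply ginv_r. Qed.

Lemma St_quot_swap (l k : Mor K) (e : mtgt k = mtgt l) (e' : mtgt l = mtgt k) :
  St_quot K k l e' = ginv (St_quot K l k e).
Proof.
  destruct l as [[sl tl] hl], k as [[sk tk] hk]. unfold mtgt in *; simpl in *.
  subst tk. rewrite (proof_irrelevance _ e' eq_refl). unfold St_quot; simpl.
  rewrite ginv_comp, ginvK. reflexivity.
Qed.

Lemma St_quot_comp (a b c : Mor K) (e1 : mtgt b = mtgt a) (e2 : mtgt c = mtgt b)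
  (e3 : mtgt c = mtgt a) :
  comp (St_quot K b c e2) (St_quot K a b e1) = St_quot K a c e3.
Proof.
  destruct a as [[sa ta] ha], b as [[sb tb] hb], c as [[sc tc] hc].
  unfold mtgt in *; simpl in *. subst tb tc.
  rewrite (proof_irrelevance _ e3 eq_refl). unfold St_quot; simpl.
  rewrite <- comp_assoc. f_equal.
  rewrite comp_assoc, ginv_r. apply comp_id_l.
Qed.

Lemma St_quot_id (k : Mor K) (e : mtgt k = mtgt k) : St_quot K k k e = idm (msrc k).
Proof.
  rewrite (proof_irrelevance _ e eq_refl).
  destruct k as [[sk tk] hk]. unfold St_quot; simpl. apply ginv_l.
Qed.

End GroupoidInverse.

Lemma mkMor_inj_ends (C : Category) (a b a' b' : Ob C) (x : Hom a b) (y : Hom a' b') :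
  mkMor x = mkMor y -> a = a' /\ b = b'.
Proof.
  intro Hm. assert (Hp := f_equal (@projT1 _ _) Hm). simpl in Hp.
  injection Hp; auto.
Qed.

Lemma mkMor_ginv (K : Groupoid) (a b a' b' : Ob K) (x : Hom a b) (y : Hom a' b') :
  mkMor x = mkMor y -> mkMor (ginv x) = mkMor (ginv y).
Proof.
  intro Hm. destruct (mkMor_inj_ends _ _ _ _ _ _ _ Hm) as [Ha Hb]. subst.
  apply inj_pair2 in Hm. subst. reflexivity.
Qed.

Lemma mkMor_comp (C : Category) (a b c a' b' c' : Ob C) (x1 : Hom a b) (x2 : Hom b c)
  (y1 : Hom a' b') (y2 : Hom b' c') :
  mkMor x1 = mkMor y1 -> mkMor x2 = mkMor y2 -> mkMor (comp x2 x1) = mkMor (comp y2 y1).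
Proof.
  intros H1 H2. destruct (mkMor_inj_ends _ _ _ _ _ _ _ H1) as [Ha Hb].
  destruct (mkMor_inj_ends _ _ _ _ _ _ _ H2) as [_ Hc]. subst.
  apply inj_pair2 in H1. apply inj_pair2 in H2. subst. reflexivity.
Qed.

Definition same_block (K : Groupoid) (l k l' k' : Mor K) : Prop :=
  exists e e', mkMor (St_quot K l k e) = mkMor (St_quot K l' k' e').

Lemma same_blockE K l k l' k' : same_block K l k l' k' -> forall e e',
  mkMor (St_quot K l k e) = mkMor (St_quot K l' k' e').
Proof.
  intros [e0 [e0' Hq]] e e'.
  rewrite (proof_irrelevance _ e e0), (proof_irrelevance _ e' e0'). exact Hq.
Qed.

Lemma same_block_swap K l k l' k' : same_block K l k l' k' -> same_block K k l k' l'.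
Proof.
  intros [e [e' Hq]]. exists (eq_sym e), (eq_sym e').
  rewrite (St_quot_swap K l k e), (St_quot_swap K l' k' e'). apply mkMor_ginv, Hq.
Qed.

Lemma same_block_diag K l k l' k' : same_block K l k l' k' -> same_block K k k k' k'.
Proof.
  intros [e [e' Hq]]. destruct (mkMor_inj_ends _ _ _ _ _ _ _ Hq) as [_ Hs].
  exists eq_refl, eq_refl. rewrite !St_quot_id, Hs. reflexivity.
Qed.

Lemma same_block_comp K a b c a' b' c' :
  same_block K a b a' b' -> same_block K b c b' c' -> same_block K a c a' c'.
Proof.
  intros [e1 [e1' H1]] [e2 [e2' H2]].
  exists (eq_trans e2 e1), (eq_trans e2' e1').
  rewrite <- (St_quot_comp K a b c e1 e2), <- (St_quot_comp K a' b' c' e1' e2').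
  apply mkMor_comp; assumption.
Qed.

Lemma Functor_St_eq (C : Category) (K : Groupoid) (F1 F2 : Functor C (St_cat K)) :
  (forall a, fobj F1 a = fobj F2 a) -> F1 = F2.
Proof.
  destruct F1 as [o1 m1 i1 c1], F2 as [o2 m2 i2 c2]. simpl. intros Ho.
  assert (o1 = o2) by (apply functional_extensionality; exact Ho). subst o2.
  assert (m1 = m2).
  { do 3 (apply functional_extensionality_dep; intro). cbn. apply proof_irrelevance. }
  subst m2. f_equal; apply proof_irrelevance.
Qed.

Section StildeHomotopy.
Variables G H : Groupoid.

Notation qobj F a := (fobj (qfun F) a).

Lemma QSMor_same_block (F : QSMor (Stilde G) (Stilde H)) l k l' k' :
  same_block G l k l' k' -> same_block H (qobj F l) (qobj F k) (qobj F l') (qobj F k').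
Proof.
  intros [e [e' Hq]].
  destruct (qfun_blocks _ _ F (mkMor (St_quot G l k e))) as [j Hj].
  exists (fmap (qfun F) (a:=l) (b:=k) e), (fmap (qfun F) (a:=l') (b:=k') e').
  exact (eq_trans (Hj l k e eq_refl) (eq_sym (Hj l' k' e' (eq_sym Hq)))).
Qed.

Definition htpy_compatible (phi psi : QSMor (Stilde G) (Stilde H)) : Prop :=
  (forall a b : Mor G, mtgt b = mtgt a -> mtgt (qobj psi b) = mtgt (qobj phi a)) /\
  (forall l k l' k', same_block G l k l' k' ->
      same_block H (qobj phi l) (qobj psi k) (qobj phi l') (qobj psi k')).

Lemma htpy_compatible_refl phi : htpy_compatible phi phi.
Proof.
  split.
  - intros a b e. exact (fmap (qfun phi) (a:=a) (b:=b) e).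
  - apply QSMor_same_block.
Qed.

Lemma htpy_compatible_sym phi psi :
  htpy_compatible phi psi -> htpy_compatible psi phi.
Proof.
  intros [Ht Hb]. split.
  - intros a b e. symmetry. apply Ht. symmetry. exact e.
  - intros l k l' k' Hq. apply same_block_swap, Hb, same_block_swap, Hq.
Qed.

Lemma htpy_compatible_trans phi chi psi :
  htpy_compatible phi chi -> htpy_compatible chi psi -> htpy_compatible phi psi.
Proof.
  intros [A1 A2] [B1 B2]. split.
  - intros a b e. rewrite (B1 b b eq_refl). apply A1, e.
  - intros l k l' k' Hq. apply same_block_comp with (qobj chi k) (qobj chi k').
    + apply A2, Hq.
    + apply B2. eapply same_block_diag, Hq.
Qed.

Lemma homotopy_htpy_compatible phi psi :
  homotopy_to phi psi -> htpy_compatible phi psi.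
Proof.
  intros [Hm [E0 E1]].
  assert (O0 : forall a, fobj (qfun Hm) (a, false) = qobj phi a) by (rewrite <- E0; reflexivity).
  assert (O1 : forall a, fobj (qfun Hm) (a, true) = qobj psi a) by (rewrite <- E1; reflexivity).
  split.
  - intros a b e. rewrite <- O0, <- O1.
    exact (fmap (qfun Hm) (a := (a, false)) (b := (b, true)) (e, eq_refl)).
  - intros l k l' k' [e [e' Hq]].
    pose (up := (eq_refl : @Hom Interval false true)).
    destruct (qfun_blocks _ _ Hm (mkMor (St_quot G l k e), mkMor up)) as [j Hj].
    pose proof (Hj (l, false) (k, true) (e, up) (conj eq_refl eq_refl)) as A.
    pose proof (Hj (l', false) (k', true) (e', up) (conj (eq_sym Hq) eq_refl)) as B.
    rewrite <- !O0, <- !O1. eexists; eexists. exact (eq_trans A (eq_sym B)).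
Qed.

Section HomotopyConstruction.
Variables phi psi : QSMor (Stilde G) (Stilde H).
Hypothesis Hcompat : htpy_compatible phi psi.

Definition htpy_obj (x : Mor G * bool) : Mor H :=
  if snd x then qobj psi (fst x) else qobj phi (fst x).

Definition htpy_map (x y : Ob (prodCat (St_cat G) Interval))
  (m : @Hom (prodCat (St_cat G) Interval) x y) :
  @Hom (St_cat H) (htpy_obj x) (htpy_obj y).
Proof.
  destruct x as [a i], y as [b j], m as [e p]. simpl in *.
  destruct i, j; simpl in *.
  - exact (fmap (qfun psi) (a:=a) (b:=b) e).
  - discriminate p.
  - exact (proj1 Hcompat a b e).
  - exact (fmap (qfun phi) (a:=a) (b:=b) e).
Defined.

Definition htpy_functor : Functor (prodCat (St_cat G) Interval) (St_cat H).
Proof.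
  refine (Build_Functor (prodCat (St_cat G) Interval) (St_cat H) htpy_obj htpy_map _ _);
    intros; cbn; apply proof_irrelevance.
Defined.

Lemma htpy_obj_same_block (x y x0 y0 : Mor G * bool) :
  snd x = snd x0 -> snd y = snd y0 -> implb (snd x) (snd y) = true ->
  same_block G (fst x) (fst y) (fst x0) (fst y0) ->
  same_block H (htpy_obj x) (htpy_obj y) (htpy_obj x0) (htpy_obj y0).
Proof.
  destruct x as [a i], y as [b j], x0 as [a0 i0], y0 as [b0 j0]; simpl.
  intros -> -> p Hq. unfold htpy_obj; simpl.
  destruct i0, j0; simpl in p.
  - apply QSMor_same_block, Hq.
  - discriminate p.
  - apply (proj2 Hcompat), Hq.
  - apply QSMor_same_block, Hq.
Qed.

(* The target block of a source block is that of the image of any of its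
   members; an empty source block may be sent anywhere. *)
Definition htpy_qsmor : QSMor (QSprod (Stilde G) Iqs) (Stilde H).
Proof.
  refine (Build_QSMor (QSprod (Stilde G) Iqs) (Stilde H) htpy_functor _).
  intros [f mi].
  destruct (classic (exists (x y : Ob (prodCat (St_cat G) Interval))
      (m : @Hom (prodCat (St_cat G) Interval) x y),
      qblock (QSprod (Stilde G) Iqs) (f, mi) m)) as [[x0 [y0 [m0 Hb0]]] | Hempty].
  - exists (mkMor (St_quot H (htpy_obj x0) (htpy_obj y0) (htpy_map x0 y0 m0))).
    intros x y m [Hb1 Hb2]. destruct Hb0 as [Hb01 Hb02]. simpl in *.
    apply same_blockE.
    rewrite <- Hb02 in Hb2. destruct (mkMor_inj_ends _ _ _ _ _ _ _ Hb2) as [Ei Ej].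
    apply htpy_obj_same_block; try assumption.
    + exact (snd m).
    + exists (fst m), (fst m0). exact (eq_trans Hb1 (eq_sym Hb01)).
  - exists (qobj phi f). intros x y m Hb. exfalso. apply Hempty. eauto.
Defined.

Lemma htpy_qsmor_is_homotopy : is_homotopy phi psi htpy_qsmor.
Proof. split; apply Functor_St_eq; reflexivity. Qed.

End HomotopyConstruction.

Lemma homotopy_toP phi psi : homotopy_to phi psi <-> htpy_compatible phi psi.
Proof.
  split; [apply homotopy_htpy_compatible |].
  intro Hc. exists (htpy_qsmor phi psi Hc). apply htpy_qsmor_is_homotopy.
Qed.

End StildeHomotopy.

Theorem proposition4p10 (G H : Groupoid)
  (phi psi : QSMor (Stilde G) (Stilde H)) :
  qs_htpc phi psi <-> homotopy_to phi psi.
Proof.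
  rewrite homotopy_toP. split.
  - induction 1 as [chi | chi chi' psi' Hsim _ IH].
    + apply htpy_compatible_refl.
    + apply htpy_compatible_trans with chi'; [| exact IH].
      destruct Hsim as [Hh | Hh]; apply homotopy_toP in Hh;
        [exact Hh | apply htpy_compatible_sym, Hh].
  - intro Hc. apply Relation_Operators.rt1n_trans with psi;
    [left; apply homotopy_toP; exact Hc | apply Relation_Operators.rt1n_refl].
Qed.
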